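(* Let $R$ be any unital ring and $A\in GL_n(R)$. If some entry of $A$ is an idempotent, then $A$ can be reduced by a finite sequence of elementary row and column operations to a matrix of the form $\begin{bmatrix}1&0\\0&A'\end{bmatrix}$, i.e. with $1,1$ entry equal to $1$ and all other entries of the first row and first column equal to $0$.
   Context: An elementary row (resp. column) operation adds a left (resp. right) multiple by an element of $R$ of one row (resp. column) to a different row (resp. column); equivalently, multiplication on the left (resp. right) by a transvection $I+re_{ij}$ with $i\neq j$, $r\in R$. *)

From HB Require Import structures.
From mathcomp Require Import all_boot all_order all_algebra.
Set Implicit Arguments. Unset Strict Implicit. Unset Printing Implicit Defensive.
Import GRing.Theory.
Local Open Scope ring_scope.

(* The transvection I + r e_ij (r placed at entry (i,j)); over a possibly
   noncommutative ring, (r *: M) k l = r * M k l. *)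
Definition transvection (R : pzRingType) (n : nat) (i j : 'I_n) (r : R) : 'M[R]_n :=
  1%:M + r *: delta_mx i j.

Definition invertible_mx (R : pzRingType) (n : nat) (A : 'M[R]_n) : Prop :=
  exists B : 'M[R]_n, A *m B = 1%:M /\ B *m A = 1%:M.

Inductive elem_reduces (R : pzRingType) (n : nat) : 'M[R]_n -> 'M[R]_n -> Prop :=
| er_refl A : elem_reduces A A
| er_row A B (i j : 'I_n) (r : R) :
    i != j -> elem_reduces (transvection i j r *m A) B -> elem_reduces A B
| er_col A B (i j : 'I_n) (r : R) :
    i != j -> elem_reduces (A *m transvection i j r) B -> elem_reduces A B.

From HB Require Import structures.
From mathcomp Require Import all_boot all_order all_algebra.
Set Implicit Arguments. Unset Strict Implicit. Unset Printing Implicit Defensive.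
Import GRing.Theory.
Local Open Scope ring_scope.

(* Move the idempotent e to the corner by elementary operations; only a right
   inverse C of A is needed.  Row 0 of A times column 0 of C gives
   e c + sum_(k > 0) a_k c_k = 1, so adding to column 0 the columns k with
   coefficients c_k (1 - e) makes the corner e + (1 - e c)(1 - e) = 1 - x with
   x = e c (1 - e); as x * x = 0, this corner has right inverse 1 + x.  Two more
   column operations turn a corner with a right inverse into 1 (for 1 x 1
   matrices, an idempotent with a right inverse is already 1), and a corner 1
   clears its row and column. *)

Section ElementaryOperations.

Variables (R : pzRingType) (n : nat).
Implicit Types (A B C : 'M[R]_n) (i j : 'I_n) (r : R).

Lemma transvection_mulmxE i j r A k l :
  (transvection i j r *m A) k l = if k == i then A k l + r * A j l else A k l.
Proof.
rewrite /transvection mulmxDl mul1mx mxE [X in _ + X]mxE.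
rewrite (bigD1 j) //= big1 ?addr0 => [|m /negbTE mj]; last first.
  by rewrite !mxE mj andbF mulr0 mul0r.
by rewrite !mxE eqxx andbT; case: eqP => _; rewrite ?mulr1 // mulr0 mul0r addr0.
Qed.

Lemma mulmx_transvectionE i j r A k l :
  (A *m transvection i j r) k l = if l == j then A k l + A k i * r else A k l.
Proof.
rewrite /transvection mulmxDr mulmx1 mxE [X in _ + X]mxE.
rewrite (bigD1 i) //= big1 ?addr0 => [|m /negbTE mi]; last first.
  by rewrite !mxE mi mulr0 mulr0.
by rewrite !mxE eqxx /=; case: eqP => _; rewrite ?mulr1 // !mulr0 addr0.
Qed.

Lemma transvectionK i j r : i != j ->
  transvection i j r *m transvection i j (- r) = 1%:M.
Proof.
move=> /negbTE ij; apply/matrixP => k l; rewrite mulmx_transvectionE.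
case: eqP => [->|/eqP/negbTE lj]; last by rewrite !mxE lj andbF mulr0 addr0.
rewrite !mxE ij eqxx andbT andbF mulr0 addr0.
by case: (k == i); rewrite ?mulr1 ?mul1r ?addrK // mulr0 mul0r !addr0.
Qed.

Lemma elem_reduces_trans A B C :
  elem_reduces A B -> elem_reduces B C -> elem_reduces A C.
Proof. by elim=> // {}A {}B i j r ij _ IH /IH; [exact: er_row | exact: er_col]. Qed.

Lemma elem_reduces_rinv A B :
  elem_reduces A B -> (exists C, A *m C = 1%:M) -> exists C, B *m C = 1%:M.
Proof.
elim=> // {}A {}B i j r ij _ IH [C AC]; apply: IH.
  exists (C *m transvection i j (- r)).
  by rewrite mulmxA -(mulmxA _ A) AC mulmx1 transvectionK.
exists (transvection i j (- r) *m C).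
by rewrite mulmxA -(mulmxA A) transvectionK // mulmx1.
Qed.

Lemma elem_reduces_gather_col i (c : 'I_n -> R) A :
  exists2 A', elem_reduces A A' & forall k l,
    A' k l = if l == i then A k i + \sum_(j | j != i) A k j * c j else A k l.
Proof.
elim: (index_enum _) A => [|j s IHs] A.
  by exists A => [|k l]; [exact: er_refl | rewrite big_nil addr0; case: eqP => [->|]].
have [-> | ji] := eqVneq j i.
  by have [A' rA' eA'] := IHs A; exists A' => // k l; rewrite eA' big_cons eqxx.
have [A' rA' eA'] := IHs (A *m transvection j i (c j)).
exists A' => [|k l]; first exact: er_col ji rA'.
rewrite eA' big_cons ji !mulmx_transvectionE eqxx -addrA; case: eqP => // _.
by congr (_ + (_ + _)); apply: eq_bigr => j' /negbTE j'i; rewrite mulmx_transvectionE j'i.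
Qed.

Lemma elem_reduces_spread_col i (c : 'I_n -> R) A :
  exists2 A', elem_reduces A A' & forall k l,
    A' k l = if l == i then A k l else A k l + A k i * c l.
Proof.
suff [A' rA' eA'] : exists2 A', elem_reduces A A' & forall k l, A' k l =
    if l == i then A k l else A k l + \sum_(m <- index_enum 'I_n | m == l) A k i * c m.
  by exists A' => // k l; rewrite eA' big_pred1_eq.
elim: (index_enum _) A => [|m s IHs] A.
  by exists A => [|k l]; [exact: er_refl | rewrite big_nil addr0 if_same].
have [-> | mi] := eqVneq m i.
  have [A' rA' eA'] := IHs A; exists A' => // k l; rewrite eA' big_cons.
  by case: eqP => // /eqP /negbTE li; rewrite eq_sym li.
have im : (i == m) = false by rewrite eq_sym (negbTE mi).
have [A' rA' eA'] := IHs (A *m transvection i m (c m)).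
exists A' => [|k l]; first by apply: er_col _ rA'; rewrite im.
rewrite eA' big_cons !mulmx_transvectionE im; case: (l =P i) => [->|_]; first by rewrite im.
case: (l =P m) => [->|/eqP lm]; first by rewrite eqxx addrA.
by rewrite eq_sym (negbTE lm).
Qed.

Lemma elem_reduces_spread_row i (c : 'I_n -> R) A :
  exists2 A', elem_reduces A A' & forall k l,
    A' k l = if k == i then A k l else A k l + c k * A i l.
Proof.
suff [A' rA' eA'] : exists2 A', elem_reduces A A' & forall k l, A' k l =
    if k == i then A k l else A k l + \sum_(m <- index_enum 'I_n | m == k) c m * A i l.
  by exists A' => // k l; rewrite eA' big_pred1_eq.
elim: (index_enum _) A => [|m s IHs] A.
  by exists A => [|k l]; [exact: er_refl | rewrite big_nil addr0 if_same].
have [-> | mi] := eqVneq m i.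
  have [A' rA' eA'] := IHs A; exists A' => // k l; rewrite eA' big_cons.
  by case: eqP => // /eqP /negbTE ki; rewrite eq_sym ki.
have im : (i == m) = false by rewrite eq_sym (negbTE mi).
have [A' rA' eA'] := IHs (transvection m i (c m) *m A).
exists A' => [|k l]; first exact: er_row mi rA'.
rewrite eA' big_cons !transvection_mulmxE im; case: (k =P i) => [->|_]; first by rewrite im.
case: (k =P m) => [->|/eqP km]; first by rewrite eqxx addrA.
by rewrite eq_sym (negbTE km).
Qed.

End ElementaryOperations.

Lemma elem_reduces_move_row (R : pzRingType) n (A : 'M[R]_n.+1) i :
  exists2 A', elem_reduces A A' & forall l, A' ord0 l = A i l.
Proof.
have [-> | i0] := eqVneq i ord0; first by exists A => //; exact: er_refl.
have io : ord0 != i by rewrite eq_sym.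
exists (transvection ord0 i 1 *m (transvection i ord0 (-1) *m (transvection ord0 i 1 *m A))).
  exact: (er_row io (er_row i0 (er_row io (er_refl _)))).
move=> l; rewrite !transvection_mulmxE eqxx (negbTE io) (negbTE i0) eqxx.
by rewrite !mul1r mulN1r addrC subrK.
Qed.

Lemma elem_reduces_move_col (R : pzRingType) n (A : 'M[R]_n.+1) j :
  exists2 A', elem_reduces A A' & forall k, A' k ord0 = A k j.
Proof.
have [-> | j0] := eqVneq j ord0; first by exists A => //; exact: er_refl.
have oj : ord0 != j by rewrite eq_sym.
exists (A *m transvection j ord0 1 *m transvection ord0 j (-1) *m transvection j ord0 1).
  exact: (er_col j0 (er_col oj (er_col j0 (er_refl _)))).
move=> k; rewrite !mulmx_transvectionE eqxx (negbTE oj) (negbTE j0) eqxx.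
by rewrite !mulr1 mulrN1 addrC subrK.
Qed.

Lemma elem_reduces_move_entry (R : pzRingType) n (A : 'M[R]_n.+1) i j :
  exists2 A', elem_reduces A A' & A' ord0 ord0 = A i j.
Proof.
have [A1 rA1 A1i] := elem_reduces_move_row A i.
have [A2 rA2 A2j] := elem_reduces_move_col A1 j.
by exists A2; [exact: elem_reduces_trans rA1 rA2 | rewrite A2j A1i].
Qed.

Section Idempotents.

Variables (R : pzRingType) (e : R).
Hypothesis idem_e : e * e = e.

Lemma idem_rinv_eq1 c : e * c = 1 -> e = 1.
Proof. by move=> ec; rewrite -ec -{2}idem_e -mulrA ec mulr1. Qed.

Lemma idem_corner_rinv b :
  (e + (1 - e * b) * (1 - e)) * (1 + e * b * (1 - e)) = 1.
Proof.
set x := e * b * (1 - e).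
have -> : e + (1 - e * b) * (1 - e) = 1 - x.
  by rewrite mulrBl mul1r /x -mulrA addrA [e + _]addrC subrK.
have xx : x * x = 0.
  by rewrite /x -!mulrA [(1 - e) * _]mulrA mulrBl mul1r idem_e subrr mul0r !mulr0.
by rewrite mulrDr mulr1 mulrBl mul1r xx subr0 subrK.
Qed.

End Idempotents.

Lemma elem_reduces_corner_rinv (R : pzRingType) n (A : 'M[R]_n.+2) v :
  A ord0 ord0 * v = 1 -> exists2 A', elem_reduces A A' & A' ord0 ord0 = 1.
Proof.
move=> Av; have oj : ord0 != ord_max :> 'I_n.+2 by [].
have jo : ord_max != ord0 :> 'I_n.+2 by [].
(* The two operations turn the corner u into u + a + u s, a := A 0 n.+1. *)
set s := v * (1 - A ord0 ord0 - A ord0 ord_max).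
exists (A *m transvection ord0 ord_max s *m transvection ord_max ord0 1).
  exact: (er_col oj (er_col jo (er_refl _))).
rewrite !mulmx_transvectionE eqxx (negbTE oj) eqxx mulr1 /s mulrA Av mul1r.
by rewrite [A _ ord_max + _]addrC subrK addrC subrK.
Qed.

Lemma elem_reduces_corner_idem (R : pzRingType) n (A C : 'M[R]_n.+1) :
  A *m C = 1%:M -> A ord0 ord0 * A ord0 ord0 = A ord0 ord0 ->
  exists2 A', elem_reduces A A' & A' ord0 ord0 = 1.
Proof.
move=> AC; set e := A ord0 ord0 => idem.
have row0C : e * C ord0 ord0 + \sum_(k | k != ord0) A ord0 k * C k ord0 = 1.
  by move/matrixP/(_ ord0 ord0): AC; rewrite !mxE (bigD1 ord0).
clear AC; case: n => [|m] in A C e idem row0C *.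
  exists A; first exact: er_refl.
  by apply: (idem_rinv_eq1 idem); rewrite -row0C big1 ?addr0 // => k; rewrite (ord1 k).
have [A1 rA1 A1E] := elem_reduces_gather_col ord0 (fun k => C k ord0 * (1 - e)) A.
have sumE : \sum_(k | k != ord0) A ord0 k * C k ord0 = 1 - e * C ord0 ord0.
  by rewrite -row0C addrAC subrr add0r.
have A1e : A1 ord0 ord0 = e + (1 - e * C ord0 ord0) * (1 - e).
  rewrite A1E eqxx -sumE big_distrl /=.
  by congr (_ + _); apply: eq_bigr => k _; rewrite mulrA.
have [A2 rA2 A2e] : exists2 A2, elem_reduces A1 A2 & A2 ord0 ord0 = 1.
  apply: (elem_reduces_corner_rinv (v := 1 + e * C ord0 ord0 * (1 - e))).
  by rewrite A1e idem_corner_rinv.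
by exists A2; first exact: elem_reduces_trans rA1 rA2.
Qed.

Lemma elem_reduces_clear_cross (R : pzRingType) n (A : 'M[R]_n.+1) :
  A ord0 ord0 = 1 ->
  exists2 B, elem_reduces A B & [/\ B ord0 ord0 = 1,
    forall j, j != ord0 -> B ord0 j = 0 & forall i, i != ord0 -> B i ord0 = 0].
Proof.
move=> A1.
have [A' rA' A'E] := elem_reduces_spread_col ord0 (fun l => - A ord0 l) A.
have [B rB BE] := elem_reduces_spread_row ord0 (fun k => - A' k ord0) A'.
have A'1 : A' ord0 ord0 = 1 by rewrite A'E eqxx.
exists B; first exact: elem_reduces_trans rA' rB.
split=> [|j /negbTE j0|i /negbTE i0]; rewrite BE ?eqxx ?i0 //.
  by rewrite A'E j0 A1 mul1r addrN.
by rewrite A'1 mulr1 addrN.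
Qed.

Theorem lemma2p3 (R : pzRingType) (n : nat) (A : 'M[R]_n.+1) :
  invertible_mx A ->
  (exists i j : 'I_n.+1, A i j * A i j = A i j) ->
  exists B : 'M[R]_n.+1,
    elem_reduces A B /\
    B ord0 ord0 = 1 /\
    (forall j : 'I_n.+1, j != ord0 -> B ord0 j = 0) /\
    (forall i : 'I_n.+1, i != ord0 -> B i ord0 = 0).
Proof.
move=> [C [AC _]] [i [j idem]].
have [A1 rA1 A1e] := elem_reduces_move_entry A i j.
have [C1 A1C1] := elem_reduces_rinv rA1 (ex_intro _ C AC).
have A1idem : A1 ord0 ord0 * A1 ord0 ord0 = A1 ord0 ord0 by rewrite A1e.
have [A2 rA2 A2e] := elem_reduces_corner_idem A1C1 A1idem.
have [B rB [B00 Brow Bcol]] := elem_reduces_clear_cross A2e.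
by exists B; split; first exact: elem_reduces_trans rA1 (elem_reduces_trans rA2 rB).
Qed.
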